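(* Let $\{x^k\}$ be generated by Algorithm IRG with the backtracking stepsize rule. Assume $\inf_k f(x^k)>-\infty$ and $\rho_k\to0$ as $k\to\infty$. Then: (i) $\varepsilon_k\downarrow0$ and $r_k\downarrow0$; (ii) every accumulation point of $\{x^k\}$ is a stationary point of $f$; (iii) if $\{x^k\}$ is bounded, its set of accumulation points is nonempty, compact and connected; (iv) if $\{x^k\}$ has an isolated accumulation point, then the whole sequence $\{x^k\}$ converges to it.
   Context: Algorithm IRG (general inexact reduced gradient framework). Let $f:\mathbb R^n\to\mathbb R$ be continuously differentiable. Parameters: initial point $x^1\in\mathbb R^n$, initial radii $\varepsilon_1>0$, $r_1>0$, reduction factors $\mu,\theta\in(0,1)$, and a sequence $\{\rho_k\}$ of positive numbers. For $k=1,2,\dots$: (1) choose $g^k\in\mathbb R^n$ with $\|g^k-\nabla f(x^k)\|\le\min\{\varepsilon_k,\rho_k\}$; (2) if $\|g^k\|\le r_k+\varepsilon_k$, set $r_{k+1}=\mu r_k$, $\varepsilon_{k+1}=\theta\varepsilon_k$, $d^k=0$; otherwise set $r_{k+1}=r_k$, $\varepsilon_{k+1}=\varepsilon_k$ and $d^k=-\frac{\|g^k\|-\varepsilon_k}{\|g^k\|}g^k$; (3) choose a stepsize $t_k>0$ by some rule; (4) set $x^{k+1}=x^k+t_kd^k$. Backtracking stepsize rule: fix $\beta,\gamma,\tau\in(0,1)$; if $d^k=0$ set $t_k=\tau$; otherwise $t_k=\max\{t\in\{1,\gamma,\gamma^2,\dots\}: f(x^k+td^k)\le f(x^k)-\beta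 t\|d^k\|^2\}$. *)

From HB Require Import structures.
From mathcomp Require Import all_boot all_order all_algebra.
From mathcomp Require Import all_classical all_reals all_analysis.
Set Implicit Arguments. Unset Strict Implicit. Unset Printing Implicit Defensive.
Import Order.TTheory GRing.Theory Num.Theory.
Import numFieldNormedType.Exports.
Local Open Scope classical_set_scope.
Local Open Scope ring_scope.

Definition enorm {R : realType} {n : nat} (v : 'rV[R]_n) : R :=
  Num.sqrt (\sum_(i < n) v ord0 i ^+ 2).

Definition grad {R : realType} {n : nat} (f : 'rV[R]_n -> R) (x : 'rV[R]_n)
  : 'rV[R]_n := \row_i derive f x (delta_mx ord0 i).

Definition C1 {R : realType} {n : nat} (f : 'rV[R]_n -> R) : Prop :=
  (forall x, differentiable f x) /\ continuous (grad f).

Definition accum_pt {R : realType} {n : nat} (x : nat -> 'rV[R]_n) (xs : 'rV[R]_n)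
  : Prop :=
  forall e : R, 0 < e -> forall N : nat, exists k : nat, (N <= k)%N /\ enorm (x k - xs) < e.

Definition accum_set {R : realType} {n : nat} (x : nat -> 'rV[R]_n)
  : set 'rV[R]_n := [set xs | accum_pt x xs].

Definition armijo {R : realType} {n : nat} (f : 'rV[R]_n -> R) (beta : R)
  (xk dk : 'rV[R]_n) (t : R) : Prop :=
  f (xk + t *: dk) <= f xk - beta * t * enorm dk ^+ 2.

(* Algorithm IRG with the backtracking stepsize rule (iterations indexed from 0) *)
Definition IRG_backtracking {R : realType} {n : nat} (f : 'rV[R]_n -> R)
  (mu theta beta gamma tau : R) (rho : nat -> R)
  (x g d : nat -> 'rV[R]_n) (eps r t : nat -> R) : Prop :=
  [/\ 0 < eps 0%N /\ 0 < r 0%N,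
      (0 < mu < 1) /\ (0 < theta < 1),
      [/\ 0 < beta < 1, 0 < gamma < 1 & 0 < tau < 1],
      forall k, 0 < rho k &
      forall k : nat,
        [/\ enorm (g k - grad f (x k)) <= Order.min (eps k) (rho k),
            (if enorm (g k) <= r k + eps k then
               [/\ r k.+1 = mu * r k, eps k.+1 = theta * eps k & d k = 0]
             else
               [/\ r k.+1 = r k, eps k.+1 = eps k &
                   d k = - ((enorm (g k) - eps k) / enorm (g k)) *: g k]),
            (if d k == 0 then t k = tau
             else exists j : nat,
               [/\ t k = gamma ^+ j, armijo f beta (x k) (d k) (gamma ^+ j) &
                   forall i : nat, (i < j)%N -> ~ armijo f beta (x k) (d k) (gamma ^+ i)])
          & x k.+1 = x k + t k *: d k]].

From HB Require Import structures.
From mathcomp Require Import all_boot all_order all_algebra.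
From mathcomp Require Import all_classical all_reals all_analysis.
From mathcomp Require Import ring lra.
From Stdlib Require Import Classical.
Import Order.TTheory GRing.Theory Num.Theory.
Import numFieldNormedType.Exports.
Local Open Scope classical_set_scope.
Local Open Scope ring_scope.

(* The Armijo rule lowers f by at least [beta t_k |d_k|^2] per iteration, and f is
   bounded below along the iterates; hence the steps [x_{k+1} - x_k] tend to 0, and
   along any stretch where [|d_k| >= c] the iterates move by at most the drop of f
   divided by [beta c]. If null steps stopped occurring, [r] would freeze, the
   iterates would stay bounded and cluster at some point near which, by continuity of
   [grad f], the last rejected trial stepsize [t_k / gamma -> 0] would have passed
   the Armijo test; so null steps recur and [eps], [r] shrink geometrically to 0.
   Near a noncritical accumulation point the directions stay bounded away from 0, so
   the iterates get trapped there and null steps become impossible: accumulation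
   points are critical. Claims (iii) and (iv) hold for every bounded sequence with
   vanishing steps (Ostrowski): its accumulation set is compact and connected, and an
   isolated accumulation point is its limit. *)

(** * Euclidean geometry of row vectors *)

Section Euclid.
Context {R : realType} {n : nat}.
Implicit Types u v w : 'rV[R]_n.

Definition dot u v : R := \sum_(i < n) u ord0 i * v ord0 i.

Lemma dotC u v : dot u v = dot v u.
Proof. by apply: eq_bigr => i _; rewrite mulrC. Qed.

Lemma dotDl u v w : dot (u + v) w = dot u w + dot v w.
Proof. by rewrite /dot -big_split; apply: eq_bigr => i _; rewrite mxE mulrDl. Qed.

Lemma dotZl a u v : dot (a *: u) v = a * dot u v.
Proof. by rewrite /dot mulr_sumr; apply: eq_bigr => i _; rewrite mxE mulrA. Qed.

Lemma dotNl u v : dot (- u) v = - dot u v.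
Proof. by rewrite -scaleN1r dotZl mulN1r. Qed.

Lemma dotBl u v w : dot (u - v) w = dot u w - dot v w.
Proof. by rewrite dotDl dotNl. Qed.

Lemma dotZr a u v : dot v (a *: u) = a * dot v u.
Proof. by rewrite dotC dotZl dotC. Qed.

Lemma dotBr u v w : dot w (u - v) = dot w u - dot w v.
Proof. by rewrite dotC dotBl !(dotC w). Qed.

Lemma dotDr u v w : dot w (u + v) = dot w u + dot w v.
Proof. by rewrite dotC dotDl !(dotC w). Qed.

Lemma dotrr_ge0 u : 0 <= dot u u.
Proof. by apply: sumr_ge0 => i _; rewrite -expr2 sqr_ge0. Qed.

Lemma dotrr_eq0 u : dot u u = 0 -> u = 0.
Proof.
move=> u0; apply/rowP => i; rewrite mxE.
have sqr_ge0 j : true -> 0 <= u ord0 j * u ord0 j by rewrite -expr2 sqr_ge0.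
have /(_ i isT)/eqP := psumr_eq0P sqr_ge0 u0.
by rewrite mulf_eq0 orbb => /eqP.
Qed.

Lemma enormE u : enorm u = Num.sqrt (dot u u).
Proof. by congr Num.sqrt; apply: eq_bigr => i _; rewrite expr2. Qed.

Lemma enorm_ge0 u : 0 <= enorm u.
Proof. by rewrite enormE sqrtr_ge0. Qed.

Lemma enorm_sqr u : enorm u ^+ 2 = dot u u.
Proof. by rewrite enormE sqr_sqrtr // dotrr_ge0. Qed.

Lemma enorm0 : enorm (0 : 'rV[R]_n) = 0.
Proof. by rewrite enormE /dot big1 ?sqrtr0 // => i _; rewrite mxE mul0r. Qed.

Lemma enorm_eq0 u : enorm u = 0 -> u = 0.
Proof. by move=> u0; apply: dotrr_eq0; rewrite -enorm_sqr u0 expr0n. Qed.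

Lemma enormZ a u : enorm (a *: u) = `|a| * enorm u.
Proof.
by rewrite !enormE dotZl dotZr mulrA -expr2 sqrtrM ?sqr_ge0 // sqrtr_sqr.
Qed.

Lemma enormN u : enorm (- u) = enorm u.
Proof. by rewrite -scaleN1r enormZ normrN normr1 mul1r. Qed.

Lemma enorm_distC u v : enorm (u - v) = enorm (v - u).
Proof. by rewrite -enormN opprB. Qed.

Lemma dot_sqr_le u v : dot u v ^+ 2 <= dot u u * dot v v.
Proof.
have [v0|v_neq0] := eqVneq (dot v v) 0.
  by rewrite v0 mulr0 (dotrr_eq0 _ v0) /dot big1 ?expr0n // => i _; rewrite mxE mulr0.
have v_gt0 : 0 < dot v v by rewrite lt_def v_neq0 dotrr_ge0.
(* expand [0 <= |(v.v) u - (u.v) v|^2] *)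
have := dotrr_ge0 (dot v v *: u - dot u v *: v).
rewrite !(dotBl, dotBr, dotZl, dotZr) (dotC v u) => H.
have : 0 <= dot v v * (dot v v * dot u u - dot u v ^+ 2).
  by apply: le_trans H _; rewrite le_eqVlt; apply/orP; left; apply/eqP; ring.
by rewrite pmulr_rge0 // subr_ge0 mulrC.
Qed.

Lemma cauchy_schwarz u v : `|dot u v| <= enorm u * enorm v.
Proof.
rewrite !enormE -sqrtrM ?dotrr_ge0 // -(sqrtr_sqr (dot u v)).
by rewrite ler_sqrt ?dot_sqr_le // mulr_ge0 // dotrr_ge0.
Qed.

Lemma dot_le u v : dot u v <= enorm u * enorm v.
Proof. exact: le_trans (ler_norm _) (cauchy_schwarz u v). Qed.

Lemma ler_enormD u v : enorm (u + v) <= enorm u + enorm v.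
Proof.
rewrite -(ler_pXn2r (_ : (0 < 2)%N)) ?nnegrE ?addr_ge0 ?enorm_ge0 //.
rewrite enorm_sqr dotDl !dotDr (dotC v u) sqrrD !enorm_sqr.
have := dot_le u v; lra.
Qed.

Lemma ler_enorm_dist u v w : enorm (u - w) <= enorm (u - v) + enorm (v - w).
Proof. by apply: le_trans (ler_enormD _ _); rewrite addrA subrK. Qed.

Lemma ler_enorm_add_dist u v : enorm u <= enorm v + enorm (u - v).
Proof. by apply: le_trans (ler_enormD v _); rewrite addrC subrK. Qed.

Lemma ler_entry_enorm u i : `|u ord0 i| <= enorm u.
Proof.
rewrite enormE -(sqrtr_sqr (u ord0 i)) ler_sqrt ?dotrr_ge0 //.
rewrite /dot (bigD1 i) //= expr2 lerDl.
by apply: sumr_ge0 => j _; rewrite -expr2 sqr_ge0.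
Qed.

Lemma ler_mxnorm_enorm u : `|u| <= enorm u.
Proof.
rewrite [X in X <= _]mx_normrE; apply: bigmax_le => [|[i j] _ /=].
  exact: enorm_ge0.
by rewrite (ord1 i); exact: ler_entry_enorm.
Qed.

Lemma ler_enorm_mxnorm u : enorm u <= n.+1%:R * `|u|.
Proof.
have c_ge0 : 0 <= n.+1%:R * `|u| by rewrite mulr_ge0.
rewrite enormE -(ger0_norm c_ge0) -(sqrtr_sqr (n.+1%:R * `|u|)).
rewrite ler_sqrt ?sqr_ge0 //.
have entry_sqr i : u ord0 i * u ord0 i <= `|u| ^+ 2.
  rewrite -expr2 -real_normK ?num_real // ler_pXn2r ?nnegrE //.
  rewrite [X in _ <= X]mx_normrE.
  exact: (le_bigmax _ (fun ij => `|u ij.1 ij.2|) (ord0, i)).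
apply: le_trans (ler_sum _ (fun i _ => entry_sqr i)) _.
rewrite sumr_const card_ord exprMn -[_ *+ n]mulr_natl.
apply: ler_wpM2r; first exact: sqr_ge0.
rewrite -natrX ler_nat expnS (leq_trans (leqnSn n)) //.
by rewrite -[X in (X <= _)%N]muln1 leq_mul2l expn_gt0.
Qed.

End Euclid.

(** * Topology of R^n in terms of the Euclidean norm *)

Definition infinitely_often (P : nat -> Prop) := forall N, exists2 k, (N <= k)%N & P k.

Section Topology.
Context {R : realType} {n : nat}.
Implicit Types (p y z : 'rV[R]_n) (C : set 'rV[R]_n).

Lemma nbhs_enormP p (S : set 'rV[R]_n) :
  nbhs p S <-> exists2 e, 0 < e & forall y, enorm (y - p) < e -> S y.
Proof.
split.
  move=> /nbhs_ballP[e e_gt0 ballS]; exists e => // y ype; apply: ballS.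
  rewrite -ball_normE /ball_ /= enorm_distC in ype *.
  exact: le_lt_trans (ler_mxnorm_enorm _) ype.
move=> [e e_gt0 ballS]; apply/nbhs_ballP; exists (e / n.+1%:R).
  by rewrite /= divr_gt0 // ltr0n.
move=> y; rewrite -ball_normE /ball_ /= => ype; apply: ballS.
apply: le_lt_trans (ler_enorm_mxnorm _) _.
by rewrite -opprB normrN mulrC -ltr_pdivlMr.
Qed.

Lemma closed_enormP C :
  closed C <-> forall y, (forall e, 0 < e -> exists2 z, C z & enorm (z - y) < e) -> C y.
Proof.
split=> [clC y approx|approxC y yC]; last first.
  apply: approxC => e e_gt0.
  have /yC[z [Cz zye]] : nbhs y [set z | enorm (z - y) < e] by apply/nbhs_enormP; exists e.
  by exists z.
apply: clC => S /nbhs_enormP[e e_gt0 ballS].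
by have [z Cz zye] := approx e e_gt0; exists z; split => //; exact: ballS.
Qed.

Lemma closed_enorm_le p (c : R) : closed [set y | enorm (y - p) <= c].
Proof.
apply/closed_enormP => y approx /=; apply/ler_addgt0Pr => e e_gt0.
have [z zpc zye] := approx e e_gt0.
apply: le_trans (ler_enorm_dist _ z _) _; rewrite addrC (enorm_distC y z).
by apply: lerD => //; exact: ltW.
Qed.

Lemma closed_enorm_ge p (c : R) : closed [set y | c <= enorm (y - p)].
Proof.
apply/closed_enormP => y approx /=; apply/ler_addgt0Pr => e e_gt0.
have [z czp zye] := approx e e_gt0.
apply: le_trans czp _; apply: le_trans (ler_enorm_dist _ y _) _.
by rewrite addrC lerD2l ltW.
Qed.

Lemma compact_closed_ball p (M : R) : compact [set y | enorm (y - p) <= M].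
Proof.
apply: bounded_closed_compact; last exact: closed_enorm_le.
exists (enorm p + M); split; first exact: num_real.
move=> M' MM' y /= ypM; apply: le_trans (ler_mxnorm_enorm _) _.
apply: le_trans (ltW MM'); apply: le_trans (ler_enorm_add_dist _ p) _.
by rewrite lerD2l.
Qed.

Lemma compact_enorm_le (M : R) : compact [set y : 'rV[R]_n | enorm y <= M].
Proof.
rewrite (_ : [set y | _] = [set y | enorm (y - 0) <= M]); first exact: compact_closed_ball.
by apply/funext => y /=; rewrite subr0.
Qed.

Lemma cvg_enorm (u : nat -> 'rV[R]_n) p :
  (forall e, 0 < e -> exists N, forall k, (N <= k)%N -> enorm (u k - p) < e) ->
  u @ \oo --> p.
Proof.
move=> small; apply/cvgrPdist_lt => e e_gt0; have [N uN] := small e e_gt0.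
exists N => // k Nk; rewrite -normrN opprB.
exact: le_lt_trans (ler_mxnorm_enorm _) (uN k Nk).
Qed.

Lemma continuous_enorm {h : 'rV[R]_n -> 'rV[R]_n} {p} {e : R} :
  {for p, continuous h} -> 0 < e ->
  exists2 del, 0 < del & forall y, enorm (y - p) < del -> enorm (h y - h p) < e.
Proof.
move=> hc e_gt0.
have /hc/nbhs_enormP[del del_gt0 hball] : nbhs (h p) [set z | enorm (z - h p) < e].
  by apply/nbhs_enormP; exists e.
by exists del.
Qed.

Lemma compact_cluster {u : nat -> 'rV[R]_n} {P : nat -> Prop} {C} :
  compact C -> infinitely_often (fun k => P k /\ C (u k)) ->
  exists2 y, C y &
    forall e, 0 < e -> forall N, exists k, [/\ (N <= k)%N, P k & enorm (u k - y) < e].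
Proof.
move=> cptC often.
pose phi N := projT1 (cid2 (often N)).
have phiP N : (N <= phi N)%N /\ (P (phi N) /\ C (u (phi N))).
  by rewrite /phi; case: cid2.
pose F := fmap (u \o phi) \oo.
have FC : F C by exists 0%N => // k _; exact: (phiP k).2.2.
have [y [Cy Fy]] := cptC F _ FC.
exists y => // e e_gt0 N.
have FN : F [set z | exists2 k, (N <= k)%N & z = u (phi k)].
  by exists N => // k Nk; exists k.
have ye : nbhs y [set z | enorm (z - y) < e] by apply/nbhs_enormP; exists e.
have [_ [[k Nk ->] uye]] := Fy _ _ FN ye.
by exists (phi k); split; [exact: leq_trans Nk (phiP k).1 | exact: (phiP k).2.1 |].
Qed.

End Topology.

(** * Accumulation points of sequences *)

Lemma not_eventually (P : nat -> Prop) :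
  ~ (exists N, forall k, (N <= k)%N -> P k) -> infinitely_often (fun k => ~ P k).
Proof.
move=> not_ev N; apply: NNPP => none; apply: not_ev; exists N => k Nk.
by apply: NNPP => notP; apply: none; exists k.
Qed.

Lemma invSn_small {R : realType} {e : R} : 0 < e ->
  exists N, forall k, (N <= k)%N -> k.+1%:R^-1 < e.
Proof.
move=> e_gt0; have inv_ge0 : 0 <= e^-1 by rewrite invr_ge0 ltW.
exists (Num.Def.archi_bound e^-1) => k Nk.
have lt_inv : e^-1 < k.+1%:R.
  apply: lt_le_trans (archi_boundP inv_ge0) _.
  by rewrite ler_nat (leq_trans Nk).
by rewrite -(invrK e) ltf_pV2 // ?posrE ?invr_gt0 // ltr0n.
Qed.

Lemma crossing {R : realType} {a : nat -> R} {s lo : R} {k1 k2 : nat} : (k1 <= k2)%N ->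
  (forall k, (k1 <= k)%N -> a k.+1 <= a k + s) -> a k1 < lo -> lo <= a k2 ->
  exists2 k, (k1 <= k)%N & lo <= a k <= lo + s.
Proof.
move=> k12 step lt_lo ge_lo.
have reach : exists j, lo <= a (k1 + j)%N by exists (k2 - k1)%N; rewrite subnKC.
case: (ex_minnP reach) => -[|j] reach_j min_j.
  by move: reach_j; rewrite addn0 leNgt lt_lo.
have below : a (k1 + j)%N < lo.
  by rewrite ltNge; apply/negP => /min_j; rewrite ltnn.
exists (k1 + j.+1)%N; first exact: leq_addr.
rewrite reach_j /= addnS; apply: le_trans (step _ (leq_addr _ _)) _.
by rewrite lerD2r ltW.
Qed.

Section AccumulationPoints.
Context {R : realType} {n : nat}.
Context {x : nat -> 'rV[R]_n}.
Implicit Types (y z : 'rV[R]_n) (S : set 'rV[R]_n).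

Lemma accum_closed : closed (accum_set x).
Proof.
apply/closed_enormP => y approx e e_gt0 N.
have e2_gt0 : 0 < e / 2 by rewrite divr_gt0.
have [z z_acc zy] := approx _ e2_gt0; have [k [Nk xkz]] := z_acc _ e2_gt0 N.
exists k; split => //; apply: le_lt_trans (ler_enorm_dist _ z _) _.
by rewrite [e]splitr ltrD.
Qed.

Lemma cluster_accum {P : nat -> Prop} {y} :
  (forall e, 0 < e -> forall N, exists k, [/\ (N <= k)%N, P k & enorm (x k - y) < e]) ->
  accum_pt x y.
Proof. by move=> clu e e_gt0 N; have [k [Nk _ xky]] := clu e e_gt0 N; exists k. Qed.

Context {M : R}.
Hypothesis x_bounded : forall k, enorm (x k) <= M.

Lemma accum_nonempty : accum_set x !=set0.
Proof.
have often : infinitely_often (fun k => True /\ enorm (x k) <= M).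
  by move=> N; exists N.
have [y _ clu] := compact_cluster (compact_enorm_le M) often.
by exists y; exact: cluster_accum clu.
Qed.

Lemma accum_compact : compact (accum_set x).
Proof.
have ball_acc : accum_set x = [set y : 'rV[R]_n | enorm y <= M] `&` accum_set x.
  apply/seteqP; split=> [y y_acc|y [] //]; split => //=.
  apply/ler_addgt0Pr => e e_gt0; have [k [_ xky]] := y_acc e e_gt0 0%N.
  apply: le_trans (ler_enorm_add_dist y (x k)) _.
  by rewrite enorm_distC lerD // ltW.
by rewrite ball_acc; apply: compact_closedI; [exact: compact_enorm_le | exact: accum_closed].
Qed.

Definition close_to S (eta : R) y := exists2 z, S z & enorm (y - z) < eta.

Lemma close_to_accum {eta : R} : 0 < eta ->
  exists N, forall k, (N <= k)%N -> close_to (accum_set x) eta (x k).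
Proof.
move=> eta_gt0; apply: NNPP => /not_eventually far.
have often : infinitely_often
    (fun k => ~ close_to (accum_set x) eta (x k) /\ enorm (x k) <= M).
  by move=> N; have [k Nk fark] := far N; exists k.
have [y _ clu] := compact_cluster (compact_enorm_le M) often.
have [k [_ fark xky]] := clu _ eta_gt0 0%N.
by apply: fark; exists y => //; exact: cluster_accum clu.
Qed.

End AccumulationPoints.

Lemma compact_closed_sep {R : realType} {n : nat} {B F : set 'rV[R]_n} :
  compact B -> closed F -> B `&` F = set0 ->
  exists2 eta, 0 < eta & forall u v, B u -> F v -> eta <= enorm (u - v).
Proof.
move=> cptB clF BF0; apply: NNPP => no_sep.
have pair k : exists uv : 'rV[R]_n * 'rV[R]_n,
    [/\ B uv.1, F uv.2 & enorm (uv.1 - uv.2) < k.+1%:R^-1].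
  apply: NNPP => none; apply: no_sep; exists k.+1%:R^-1; first by rewrite invr_gt0.
  move=> u v Bu Fv; rewrite leNgt; apply/negP => uv_lt.
  by apply: none; exists (u, v).
pose w k := proj1_sig (cid (pair k)).
have wP k : [/\ B (w k).1, F (w k).2 & enorm ((w k).1 - (w k).2) < k.+1%:R^-1].
  exact: proj2_sig (cid (pair k)).
have often : infinitely_often (fun k => True /\ B (w k).1).
  by move=> N; exists N => //; case: (wP N).
have [y By clu] := compact_cluster cptB often.
suff Fy : F y by have : (B `&` F) y by []; rewrite BF0.
move/closed_enormP: clF; apply=> e e_gt0.
have e2_gt0 : 0 < e / 2 by rewrite divr_gt0.
have [N invN] := invSn_small e2_gt0; have [k [Nk _ wky]] := clu _ e2_gt0 N.
have [_ Fwk wk_lt] := wP k; exists (w k).2 => //.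
apply: le_lt_trans (ler_enorm_dist _ (w k).1 _) _.
by rewrite enorm_distC [e]splitr ltrD // (lt_trans wk_lt) ?invN.
Qed.

Section SmallSteps.
Context {R : realType} {n : nat}.
Context {x : nat -> 'rV[R]_n}.
Implicit Types (y z : 'rV[R]_n) (S : set 'rV[R]_n).

Lemma close_to_disjoint {B F : set 'rV[R]_n} {eta : R} {y} :
  (forall u v, B u -> F v -> 3 * eta <= enorm (u - v)) ->
  close_to B eta y -> close_to F eta y -> False.
Proof.
move=> sep [u Bu yu] [v Fv yv]; have := sep u v Bu Fv.
have := ler_enorm_dist u y v; have := enorm_ge0 (y - u).
by rewrite (enorm_distC u y); lra.
Qed.

Lemma close_to_propagate {B F : set 'rV[R]_n} {eta : R} {K k j : nat} :
  (forall u v, B u -> F v -> 3 * eta <= enorm (u - v)) ->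
  (forall k, (K <= k)%N -> enorm (x k.+1 - x k) < eta) ->
  (forall k, (K <= k)%N -> close_to B eta (x k) \/ close_to F eta (x k)) ->
  (K <= k)%N -> (k <= j)%N -> close_to B eta (x k) -> close_to B eta (x j).
Proof.
move=> sep step cover Kk /subnK <- closeB.
elim: (j - k)%N => [|i IH]; first by rewrite add0n.
have Kik : (K <= i + k)%N by apply: leq_trans Kk (leq_addl _ _).
rewrite addSn; case: (cover (i + k).+1 (leqW Kik)) => // -[v Fv xv].
have [u Bu xu] := IH; exfalso.
have := sep u v Bu Fv; have := step _ Kik.
have := ler_enorm_dist u (x (i + k)) v.
have := ler_enorm_dist (x (i + k)) (x (i + k).+1) v.
by rewrite (enorm_distC u (x (i + k))) (enorm_distC (x (i + k)) (x (i + k).+1)); lra.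
Qed.

Hypothesis x_steps :
  forall e : R, 0 < e -> exists N, forall k, (N <= k)%N -> enorm (x k.+1 - x k) < e.

Lemma isolated_accum_cvg xs : accum_pt x xs ->
  (exists2 e : R, 0 < e & forall y, accum_pt x y -> enorm (y - xs) < e -> y = xs) ->
  x @ \oo --> xs.
Proof.
move=> xs_acc [e e_gt0 iso]; apply: cvg_enorm => eps eps_gt0.
apply: NNPP => /not_eventually far.
pose del := Num.min eps (e / 2).
have del_gt0 : 0 < del by rewrite lt_min eps_gt0 divr_gt0.
have del2_gt0 : 0 < del / 2 by rewrite divr_gt0.
have del_lt_e : del < e.
  by rewrite gt_min; apply/orP; right; rewrite ltr_pdivrMr // ltr_pMr // ltr1n.
pose annulus := [set y | enorm (y - xs) <= del] `&` [set y | del / 2 <= enorm (y - xs)].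
have often : infinitely_often (fun k => True /\ annulus (x k)).
  move=> N; have [N0 stepN0] := x_steps _ del2_gt0.
  have [k1 [Nk1 xk1]] := xs_acc _ del2_gt0 (maxn N N0).
  have [k2 k12 xk2] := far k1.
  have step k : (k1 <= k)%N -> enorm (x k.+1 - xs) <= enorm (x k - xs) + del / 2.
    move=> k1k; apply: le_trans (ler_enorm_dist _ (x k) _) _; rewrite addrC lerD2l ltW //.
    by apply: stepN0; rewrite (leq_trans (leq_maxr N _)) // (leq_trans Nk1).
  have del_le_xk2 : del / 2 <= enorm (x k2 - xs).
    have del_le_eps : del <= eps by rewrite ge_min lexx.
    by move/negP: xk2; rewrite -leNgt; lra.
  have [k k1k /andP[lo hi]] := crossing k12 step xk1 del_le_xk2.
  exists k; first by rewrite (leq_trans (leq_maxl N N0)) // (leq_trans Nk1).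
  by split=> //; split => //; rewrite /= -splitr in hi.
have cpt_annulus : compact annulus.
  by apply: compact_closedI; [exact: compact_closed_ball | exact: closed_enorm_ge].
have [y [y_le y_ge] clu] := compact_cluster cpt_annulus often.
have y_xs : y = xs by apply: iso; [exact: cluster_accum clu | exact: le_lt_trans y_le _].
by move: y_ge; rewrite /= y_xs subrr enorm0; lra.
Qed.

Context {M : R}.
Hypothesis x_bounded : forall k, enorm (x k) <= M.

Lemma accum_connected : connected (accum_set x).
Proof.
move=> B [b Bb] [C1 oC1 BAC1] [C2 cC2 BAC2]; set A := accum_set x.
apply: NNPP => BneA; pose F := A `&` ~` C1.
have [a [Aa nC1a]] : F !=set0.
  apply: NNPP => F0; apply: BneA; apply/seteqP; split=> [z|z Az].
    by rewrite BAC1 => -[].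
  rewrite BAC1; split => //; apply: NNPP => nC1z; apply: F0; by exists z.
have cptB : compact B.
  by rewrite BAC2; apply: compact_closedI => //; exact: accum_compact x_bounded.
have clF : closed F by apply: closedI; [exact: accum_closed | exact: open_closedC].
have BF0 : B `&` F = set0.
  by rewrite BAC1; apply/seteqP; split => [z [[_ ?] [_ ?]] //|z []].
have [eta3 eta3_gt0 sep3] := compact_closed_sep cptB clF BF0.
pose eta := eta3 / 3.
have eta_gt0 : 0 < eta by rewrite divr_gt0.
have sepBF u v : B u -> F v -> 3 * eta <= enorm (u - v).
  by move=> Bu Fv; rewrite mulrC divfK ?sep3.
have sepFB u v : F u -> B v -> 3 * eta <= enorm (u - v).
  by move=> Fu Bv; rewrite enorm_distC sepBF.
have [N1 closeA] := close_to_accum x_bounded eta_gt0.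
have [N2 stepN2] := x_steps _ eta_gt0.
pose K := maxn N1 N2.
have step k : (K <= k)%N -> enorm (x k.+1 - x k) < eta.
  by move=> Kk; apply: stepN2; rewrite (leq_trans (leq_maxr _ _) Kk).
have cover k : (K <= k)%N -> close_to B eta (x k) \/ close_to F eta (x k).
  move=> Kk; have [z Az xz] := closeA k (leq_trans (leq_maxl _ _) Kk).
  by case: (pselect (C1 z)) => C1z; [left|right]; exists z => //; rewrite BAC1.
have cover' k : (K <= k)%N -> close_to F eta (x k) \/ close_to B eta (x k).
  by move=> Kk; rewrite or_comm; exact: cover.
have Ab : A b by move: Bb; rewrite BAC1 => -[].
have [kb [Kkb xkb]] := Ab eta eta_gt0 K; have [ka [Kka xka]] := Aa eta eta_gt0 K.
apply: (close_to_disjoint (y := x (maxn ka kb)) sepBF).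
  by apply: (close_to_propagate sepBF step cover Kkb (leq_maxr _ _)); exists b.
by apply: (close_to_propagate sepFB step cover' Kka (leq_maxl _ _)); exists a.
Qed.

End SmallSteps.

(** * Calculus along segments *)

Lemma geometric_cvg0 {R : realType} (u : nat -> R) (q : R) : 0 <= q < 1 ->
  (forall k, 0 < u k) -> (forall k, u k.+1 <= u k) ->
  infinitely_often (fun k => u k.+1 = q * u k) -> u @ \oo --> (0 : R).
Proof.
move=> /andP[q_ge0 q_lt1] u_gt0 u_dec contract.
have u_noninc p k : (p <= k)%N -> u k <= u p.
  move=> /subnK <-; elim: (k - p)%N => [|j IH]; first by rewrite add0n.
  by rewrite addSn (le_trans (u_dec _)).
have u_le_pow j : exists N, u N <= q ^+ j * u 0%N.
  elim: j => [|j [N uN]]; first by exists 0%N; rewrite expr0 mul1r.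
  have [k Nk uk] := contract N; exists k.+1; rewrite uk exprS -mulrA.
  by rewrite ler_wpM2l // (le_trans (u_noninc _ _ Nk)).
apply/cvgrPdist_lt => e e_gt0.
have [j qj] : exists j, q ^+ j < e / u 0%N.
  have /cvgrPdist_lt/(_ (e / u 0%N)) : (fun j => q ^+ j) @ \oo --> 0.
    by apply: cvg_expr; rewrite ger0_norm.
  case=> [|N _ qN]; first by rewrite divr_gt0.
  exists N; move: (qN N (leqnn N)).
  by rewrite sub0r normrN ger0_norm // exprn_ge0.
have [N uN] := u_le_pow j; exists N => // k Nk.
rewrite sub0r normrN ger0_norm ?ltW //.
apply: le_lt_trans (u_noninc _ _ Nk) _; apply: le_lt_trans uN _.
by rewrite -ltr_pdivlMr.
Qed.

Section Calculus.
Context {R : realType} {n : nat}.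
Context {f : 'rV[R]_n -> R}.
Hypothesis f_diff : forall x, differentiable f x.

Lemma derive_grad x v : derive f x v = dot (grad f x) v.
Proof.
rewrite deriveE // {1}(row_sum_delta v) linear_sum /dot; apply: eq_bigr => j _.
by rewrite linearZ /= mxE -deriveE // mulrC.
Qed.

Lemma mvt_segment x d {s : R} : 0 < s ->
  exists2 c, 0 < c < s & f (x + s *: d) - f x = s * dot (grad f (x + c *: d)) d.
Proof.
move=> s_gt0; pose h a := f (x + a *: d).
have quotE a : (fun u : R => u^-1 *: ((h \o shift a) (u *: 1) - h a)) =
    (fun u => u^-1 *: ((f \o shift (x + a *: d)) (u *: d) - f (x + a *: d))).
  apply/funext => u /=; rewrite /h; congr (_ *: (f _ - _)).
  by rewrite [u *: 1]mulr1 scalerDl addrCA addrC.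
have h_der a : derivable h a 1 by rewrite /derivable quotE; exact: diff_derivable.
have h'E a : derive h a 1 = dot (grad f (x + a *: d)) d.
  by rewrite /derive quotE -derive_grad.
case: (@MVT R h (fun a => dot (grad f (x + a *: d)) d) 0 s s_gt0).
- by move=> c _; apply: DeriveDef; [exact: h_der | exact: h'E].
- by apply: derivable_within_continuous => c _; exact: h_der.
move=> c; rewrite in_itv /= => cs; rewrite /h scale0r addr0 subr0 => ->.
by exists c => //; rewrite mulrC.
Qed.

End Calculus.

(** * Algorithm IRG with backtracking *)

Section IRG.
Context {R : realType} {n : nat}.
Context {f : 'rV[R]_n -> R} {mu theta beta gamma tau : R} {rho : nat -> R}.
Context {x g d : nat -> 'rV[R]_n} {eps r t : nat -> R}.
Hypothesis irg : IRG_backtracking f mu theta beta gamma tau rho x g d eps r t.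

Let beta_gt0 : 0 < beta. Proof. by case: irg => _ _ [/andP[]]. Qed.
Let beta_lt1 : beta < 1. Proof. by case: irg => _ _ [/andP[]]. Qed.
Let gamma_gt0 : 0 < gamma. Proof. by case: irg => _ _ [_ /andP[]]. Qed.
Let gamma_lt1 : gamma < 1. Proof. by case: irg => _ _ [_ /andP[]]. Qed.
Let tau_gt0 : 0 < tau. Proof. by case: irg => _ _ [_ _ /andP[]]. Qed.
Let tau_lt1 : tau < 1. Proof. by case: irg => _ _ [_ _ /andP[]]. Qed.
Let mu_gt0 : 0 < mu. Proof. by case: irg => _ [/andP[]]. Qed.
Let mu_lt1 : mu < 1. Proof. by case: irg => _ [/andP[]]. Qed.
Let theta_gt0 : 0 < theta. Proof. by case: irg => _ [_ /andP[]]. Qed.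
Let theta_lt1 : theta < 1. Proof. by case: irg => _ [_ /andP[]]. Qed.

Definition null_step k := enorm (g k) <= r k + eps k.

Lemma null_stepE {k} : null_step k ->
  [/\ r k.+1 = mu * r k, eps k.+1 = theta * eps k & d k = 0].
Proof. by case: irg => _ _ _ _ /(_ k) [_]; rewrite /null_step; case: ifP. Qed.

Lemma nonnull_stepE {k} : ~ null_step k ->
  [/\ r k.+1 = r k, eps k.+1 = eps k &
      d k = - ((enorm (g k) - eps k) / enorm (g k)) *: g k].
Proof. by case: irg => _ _ _ _ /(_ k) [_]; rewrite /null_step; case: ifP. Qed.

Lemma eps_r_gt0 k : 0 < eps k /\ 0 < r k.
Proof.
elim: k => [|k [eps_gt0 r_gt0]]; first by case: irg.
have [/null_stepE[-> -> _]|/nonnull_stepE[-> -> _]] := pselect (null_step k) => //.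
by rewrite !mulr_gt0.
Qed.

Lemma eps_gt0 k : 0 < eps k. Proof. exact: (eps_r_gt0 k).1. Qed.
Lemma r_gt0 k : 0 < r k. Proof. exact: (eps_r_gt0 k).2. Qed.

Lemma eps_noninc k : eps k.+1 <= eps k.
Proof.
have [/null_stepE[_ -> _]|/nonnull_stepE[_ -> _]] := pselect (null_step k) => //.
by rewrite ger_pMl ?eps_gt0 // ltW.
Qed.

Lemma r_noninc k : r k.+1 <= r k.
Proof.
have [/null_stepE[-> _ _]|/nonnull_stepE[-> _ _]] := pselect (null_step k) => //.
by rewrite ger_pMl ?r_gt0 // ltW.
Qed.

Lemma grad_err k : enorm (g k - grad f (x k)) <= eps k.
Proof. by case: irg => _ _ _ _ /(_ k) [+ _ _ _]; rewrite le_min => /andP[]. Qed.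

Lemma enorm_dir {k} : ~ null_step k -> enorm (d k) = enorm (g k) - eps k.
Proof.
move=> /[dup] nnull /nonnull_stepE[_ _ ->].
move: nnull; rewrite /null_step => /negP; rewrite -ltNge => g_big.
have g_gt0 : 0 < enorm (g k) by rewrite (lt_trans _ g_big) ?addr_gt0 ?r_gt0 ?eps_gt0.
rewrite enormZ normrN ger0_norm ?divfK ?gt_eqF //.
by rewrite divr_ge0 ?subr_ge0 ?ltW // (le_lt_trans _ g_big) // lerDr ltW ?r_gt0.
Qed.

Lemma r_lt_enorm_dir {k} : ~ null_step k -> r k < enorm (d k).
Proof.
move=> /[dup] nnull /enorm_dir ->; rewrite ltrBrDr ltNge; exact/negP.
Qed.

Lemma dir_descent {k} : ~ null_step k -> dot (grad f (x k)) (d k) <= - enorm (d k) ^+ 2.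
Proof.
move=> nnull; have := r_lt_enorm_dir nnull; rewrite (enorm_dir nnull) => r_lt.
have [_ _ ->] := nonnull_stepE nnull.
rewrite dotZr mulNr lerN2.
have := grad_err k; have := r_gt0 k; have := eps_gt0 k => e_gt0 r_gt0k err.
have G_gt0 : 0 < enorm (g k) by lra.
have lam_ge0 : 0 <= (enorm (g k) - eps k) / enorm (g k).
  by apply: divr_ge0; lra.
have dotG : enorm (g k) * (enorm (g k) - eps k) <= dot (grad f (x k)) (g k).
  have := dot_le (g k - grad f (x k)) (g k); rewrite dotBl -enorm_sqr.
  have : enorm (g k - grad f (x k)) * enorm (g k) <= eps k * enorm (g k).
    by rewrite ler_pM2r.
  by rewrite expr2; lra.
apply: le_trans (ler_wpM2l lam_ge0 dotG).
by rewrite mulrA divfK ?expr2 // lt0r_neq0.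
Qed.

Lemma stepsizeP k : (d k = 0 /\ t k = tau) \/
  (d k != 0 /\ exists j, [/\ t k = gamma ^+ j, armijo f beta (x k) (d k) (gamma ^+ j) &
     forall i, (i < j)%N -> ~ armijo f beta (x k) (d k) (gamma ^+ i)]).
Proof.
case: irg => _ _ _ _ /(_ k) [_ _ + _].
by case: eqP => [-> ->|/eqP d_neq0 armijo_j]; [left|right].
Qed.

Lemma t_gt0 k : 0 < t k.
Proof. by case: (stepsizeP k) => [[_ ->]|[_ [j [-> _ _]]]] //; exact: exprn_gt0. Qed.

Lemma t_le1 k : t k <= 1.
Proof.
case: (stepsizeP k) => [[_ ->]|[_ [j [-> _ _]]]]; first exact: ltW.
by rewrite exprn_ile1 // ltW.
Qed.

Lemma x_next k : x k.+1 = x k + t k *: d k.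
Proof. by case: irg => _ _ _ _ /(_ k) []. Qed.

Lemma enorm_step k : enorm (x k.+1 - x k) = t k * enorm (d k).
Proof. by rewrite x_next addrC addKr enormZ ger0_norm // ltW // t_gt0. Qed.

Lemma f_descent k : f (x k.+1) <= f (x k) - beta * (t k * enorm (d k) ^+ 2).
Proof.
rewrite x_next; case: (stepsizeP k) => [[-> _]|[_ [j [-> armijo_j _]]]].
  by rewrite scaler0 addr0 enorm0 expr0n /= !mulr0 subr0.
by move: armijo_j; rewrite /armijo mulrA.
Qed.

Lemma f_noninc {p q : nat} : (p <= q)%N -> f (x q) <= f (x p).
Proof.
move=> /subnK <-; elim: (q - p)%N => [|j IH]; first by rewrite add0n.
rewrite addSn; apply: le_trans (f_descent _) _; apply: le_trans IH.
by rewrite gerBl !mulr_ge0 ?enorm_ge0 ?(ltW beta_gt0) ?(ltW (t_gt0 _)).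
Qed.

Lemma dist_le_fdrop {c : R} {p q : nat} : 0 < c -> (p <= q)%N ->
  (forall k, (p <= k)%N -> (k < q)%N -> d k = 0 \/ c <= enorm (d k)) ->
  beta * c * enorm (x q - x p) <= f (x p) - f (x q).
Proof.
move=> c_gt0 /subnK <-; elim: (q - p)%N => [|j IH] big_dirs.
  by rewrite add0n subrr enorm0 mulr0 subrr.
rewrite addSn; set k := (j + p)%N.
have step : beta * c * enorm (x k.+1 - x k) <= f (x k) - f (x k.+1).
  have t_gt0k := t_gt0 k; have := f_descent k; rewrite enorm_step.
  case: (big_dirs k (leq_addl _ _) (ltnSn _)) => [->|c_le].
    by rewrite enorm0 expr0n /= !mulr0; lra.
  have cD : c * (t k * enorm (d k)) <= t k * enorm (d k) ^+ 2.
    rewrite mulrC expr2 mulrA; apply: ler_wpM2l c_le.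
    by rewrite mulr_ge0 ?enorm_ge0 ?ltW.
  by have := ler_wpM2l (ltW beta_gt0) cD; lra.
have := IH (fun i pi ij => big_dirs i pi (ltn_trans ij (ltnSn _))).
have := ler_enorm_dist (x k.+1) (x k) (x p).
have := mulr_gt0 beta_gt0 c_gt0 => bc_gt0 tri IHj.
by have := ler_wpM2l (ltW bc_gt0) tri; lra.
Qed.

Context {m : R}.
Hypothesis f_bounded : forall k, m <= f (x k).

Lemma f_cauchy {e : R} : 0 < e ->
  exists N, forall p q, (N <= p)%N -> (p <= q)%N -> f (x p) - f (x q) < e.
Proof.
move=> e_gt0; apply: NNPP => no_N.
have drop N : exists p q, [/\ (N <= p)%N, (p <= q)%N & e <= f (x p) - f (x q)].
  apply: NNPP => none; apply: no_N; exists N => p q Np pq.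
  by rewrite ltNge; apply/negP => e_le; apply: none; exists p, q.
have drops j : exists q, f (x q) <= f (x 0%N) - j%:R * e.
  elim: j => [|j [q fq]]; first by exists 0%N; rewrite mul0r subr0.
  have [p [q' [qp pq' e_le]]] := drop q.
  by exists q'; have := f_noninc qp; rewrite -natr1 mulrDl mul1r; lra.
have ratio_ge0 : 0 <= (f (x 0%N) - m) / e.
  by apply: divr_ge0; [rewrite subr_ge0 | exact: ltW].
have [q fq] := drops (Num.Def.archi_bound ((f (x 0%N) - m) / e)).
have := archi_boundP ratio_ge0; rewrite ltr_pdivrMr // => big.
by have := f_bounded q; lra.
Qed.

Lemma decrease_vanish {e : R} : 0 < e ->
  exists N, forall k, (N <= k)%N -> t k * enorm (d k) ^+ 2 < e.
Proof.
move=> e_gt0; have [N fN] := f_cauchy (mulr_gt0 beta_gt0 e_gt0).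
exists N => k Nk; have := fN k k.+1 Nk (leqnSn k); have := f_descent k.
by move=> desc drop; rewrite -(ltr_pM2l beta_gt0); lra.
Qed.

Lemma iter_steps_vanish {e : R} : 0 < e ->
  exists N, forall k, (N <= k)%N -> enorm (x k.+1 - x k) < e.
Proof.
move=> e_gt0; have [N decN] := decrease_vanish (mulr_gt0 e_gt0 e_gt0).
exists N => k Nk; rewrite enorm_step; have := decN k Nk.
have := t_gt0 k; have := t_le1 k; have := enorm_ge0 (d k).
have [D_lt|e_le] := ltP (enorm (d k)) e.
  by move=> D_ge0 t_le1k t_gt0k _; apply: le_lt_trans D_lt; rewrite ler_piMl.
move=> D_ge0 t_le1k t_gt0k small; rewrite -(ltr_pM2r e_gt0).
apply: le_lt_trans small; rewrite expr2 mulrA; apply: ler_wpM2l e_le.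
exact: mulr_ge0 (ltW t_gt0k) D_ge0.
Qed.

Hypothesis f_C1 : C1 f.

Lemma armijo_fail_gap {k} {s : R} : ~ null_step k -> 0 < s ->
  ~ armijo f beta (x k) (d k) s ->
  exists2 c, 0 < c < s &
    (1 - beta) * enorm (d k) < enorm (grad f (x k + c *: d k) - grad f (x k)).
Proof.
move=> nnull s_gt0 fail.
have D_gt0 : 0 < enorm (d k) by rewrite (lt_trans (r_gt0 k)) ?r_lt_enorm_dir.
have [c c_range mvt] := mvt_segment f_C1.1 (x k) (d k) s_gt0.
exists c => //; set xi := x k + c *: d k in mvt *.
have : f (x k) - beta * s * enorm (d k) ^+ 2 < f (x k + s *: d k).
  by rewrite ltNge; exact/negP.
rewrite -(ltrD2r (- f (x k))) mvt => slope.
have := dot_le (grad f xi - grad f (x k)) (d k); rewrite dotBl.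
have := dir_descent nnull; rewrite -(ltr_pM2r D_gt0) => descent cs.
have : - beta * enorm (d k) ^+ 2 < dot (grad f xi) (d k) by rewrite -(ltr_pM2l s_gt0); lra.
by rewrite expr2 in descent *; lra.
Qed.

Lemma backtrack_fail {k} : ~ null_step k -> t k < gamma ->
  exists2 s, t k = gamma * s & ~ armijo f beta (x k) (d k) s.
Proof.
move=> nnull t_lt; case: (stepsizeP k) => [[d0 _]|[_ [[|i] [t_eq _ fail]]]].
- have := r_lt_enorm_dir nnull; rewrite d0 enorm0 => r_lt0.
  by have := r_gt0 k; lra.
- by move: t_lt gamma_lt1; rewrite t_eq expr0; lra.
- by exists (gamma ^+ i); [rewrite t_eq exprS | exact: fail].
Qed.

Section NonNullTail.
Context {N : nat}.
Hypothesis nonnull : forall k, (N <= k)%N -> ~ null_step k.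

Lemma nonnull_tail_r {k} : (N <= k)%N -> r k = r N.
Proof.
move=> /subnK <-; elim: (k - N)%N => [|j IH]; first by rewrite add0n.
by rewrite addSn; have [-> _ _] := nonnull_stepE (nonnull _ (leq_addl j N)).
Qed.

Lemma nonnull_tail_dir {k} : (N <= k)%N -> r N < enorm (d k).
Proof. by move=> Nk; rewrite -(nonnull_tail_r Nk); apply/r_lt_enorm_dir/nonnull. Qed.

Lemma nonnull_tail_bounded {k} : (N <= k)%N ->
  enorm (x k) <= enorm (x N) + (f (x N) - m) / (beta * r N).
Proof.
move=> Nk; have br_gt0 : 0 < beta * r N by rewrite mulr_gt0 ?r_gt0.
have := dist_le_fdrop (r_gt0 N) Nk (fun j Nj _ => or_intror (ltW (nonnull_tail_dir Nj))).
rewrite -ler_pdivlMl // => dist_le.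
apply: le_trans (ler_enorm_add_dist _ (x N)) _; rewrite lerD2l.
apply: le_trans dist_le _; rewrite mulrC ler_pM2r ?invr_gt0 //.
by have := f_bounded k; lra.
Qed.

End NonNullTail.

Lemma null_steps_often : infinitely_often null_step.
Proof.
move=> N; apply: NNPP => none.
have nonnull k : (N <= k)%N -> ~ null_step k by move=> Nk nullk; apply: none; exists k.
set rr := r N; have rr_gt0 : 0 < rr := r_gt0 N.
pose M := enorm (x N) + (f (x N) - m) / (beta * rr).
have often : infinitely_often (fun k => (N <= k)%N /\ enorm (x k) <= M).
  move=> N'; exists (maxn N N'); first exact: leq_maxr.
  by split; [exact: leq_maxl | rewrite /M /rr; exact: (nonnull_tail_bounded nonnull (leq_maxl N N'))].
have [xb _ clu] := compact_cluster (compact_enorm_le M) often.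
have e_gt0 : 0 < (1 - beta) * rr / 2 by rewrite divr_gt0 // mulr_gt0 // subr_gt0.
have [del del_gt0 grad_near] := continuous_enorm (f_C1.2 xb) e_gt0.
have del2_gt0 : 0 < del / 2 by rewrite divr_gt0.
have [N1 decN1] := decrease_vanish (mulr_gt0 gamma_gt0 (mulr_gt0 rr_gt0 rr_gt0)).
have [N2 stepN2] := iter_steps_vanish (mulr_gt0 gamma_gt0 del2_gt0).
have [k [N12k Nk xk_near]] := clu _ del2_gt0 (maxn N1 N2).
have D_gt := nonnull_tail_dir nonnull Nk.
have t_gt0k := t_gt0 k.
have t_lt : t k < gamma.
  have : t k * (rr * rr) < gamma * (rr * rr).
    apply: le_lt_trans (decN1 k (leq_trans (leq_maxl _ _) N12k)).
    apply: (ler_wpM2l (ltW t_gt0k)); rewrite expr2.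
    by apply: ler_pM; rewrite ?ltW.
  by rewrite (ltr_pM2r (mulr_gt0 rr_gt0 rr_gt0)).
have [s ts fail] := backtrack_fail (nonnull _ Nk) t_lt.
have s_gt0 : 0 < s by rewrite -(pmulr_rgt0 _ gamma_gt0) -ts.
have [c /andP[c_gt0 c_lt] gap] := armijo_fail_gap (nonnull _ Nk) s_gt0 fail.
have sD : s * enorm (d k) < del / 2.
  have := stepN2 k (leq_trans (leq_maxr _ _) N12k).
  by rewrite enorm_step ts -mulrA ltr_pM2l.
have xi_near : enorm (x k + c *: d k - xb) < del.
  rewrite addrAC; apply: le_lt_trans (ler_enormD _ _) _.
  rewrite enormZ gtr0_norm // [del]splitr ltrD //.
  by apply: le_lt_trans sD; rewrite ler_pM2r ?ltW // (lt_trans rr_gt0).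
have xk_near' : enorm (x k - xb) < del.
  by apply: lt_trans xk_near _; rewrite ltr_pdivrMr // ltr_pMr // ltr1n.
have diff_lt : enorm (grad f (x k + c *: d k) - grad f (x k)) < (1 - beta) * rr.
  apply: le_lt_trans (ler_enorm_dist _ (grad f xb) _) _.
  rewrite [X in _ < X]splitr; apply: ltrD; first exact: grad_near.
  by rewrite enorm_distC; exact: grad_near.
have rr_lt : (1 - beta) * rr < (1 - beta) * enorm (d k) by rewrite ltr_pM2l // subr_gt0.
by have := lt_trans rr_lt (lt_trans gap diff_lt); rewrite ltxx.
Qed.

Lemma eps_cvg0 : eps @ \oo --> (0 : R).
Proof.
apply: (@geometric_cvg0 _ eps theta).
- by rewrite (ltW theta_gt0) theta_lt1.
- exact: eps_gt0.
- exact: eps_noninc.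
- by move=> N; have [k Nk /null_stepE[_ ? _]] := null_steps_often N; exists k.
Qed.

Lemma r_cvg0 : r @ \oo --> (0 : R).
Proof.
apply: (@geometric_cvg0 _ r mu).
- by rewrite (ltW mu_gt0) mu_lt1.
- exact: r_gt0.
- exact: r_noninc.
- by move=> N; have [k Nk /null_stepE[? _ _]] := null_steps_often N; exists k.
Qed.

Lemma nonnull_near_noncritical {xs} : grad f xs != 0 ->
  exists c del K, [/\ 0 < c, 0 < del &
    forall k, (K <= k)%N -> enorm (x k - xs) < del -> ~ null_step k /\ c <= enorm (d k)].
Proof.
move=> grad_neq0; have G_gt0 : 0 < enorm (grad f xs).
  by rewrite lt_def enorm_ge0 andbT; apply: contraNneq grad_neq0 => /enorm_eq0 ->.
pose c := enorm (grad f xs) / 4.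
have c_gt0 : 0 < c by rewrite divr_gt0.
have Gc : enorm (grad f xs) = 4 * c by rewrite /c mulrC divfK.
have [del del_gt0 grad_near] := continuous_enorm (f_C1.2 xs) c_gt0.
have /cvgrPdist_lt/(_ c c_gt0)[N1 _ epsN1] := eps_cvg0.
have /cvgrPdist_lt/(_ c c_gt0)[N2 _ rN2] := r_cvg0.
exists c, del, (maxn N1 N2); split => // k Kk xk_near.
have := epsN1 k (leq_trans (leq_maxl _ _) Kk); have := rN2 k (leq_trans (leq_maxr _ _) Kk).
rewrite !sub0r !normrN !gtr0_norm ?eps_gt0 ?r_gt0 // => r_lt e_lt.
have := grad_near _ xk_near; have := grad_err k.
have := ler_enorm_add_dist (grad f xs) (grad f (x k)).
have := ler_enorm_add_dist (grad f (x k)) (g k).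
rewrite (enorm_distC (grad f xs)) (enorm_distC (grad f (x k)) (g k)) => tri1 tri2 err near.
have nnull : ~ null_step k by rewrite /null_step; lra.
by split => //; rewrite (enorm_dir nnull); lra.
Qed.

Lemma iterates_stay_near {xs} {c del : R} {K p : nat} : 0 < c ->
  (forall k, (K <= k)%N -> enorm (x k - xs) < del -> c <= enorm (d k)) ->
  (K <= p)%N -> enorm (x p - xs) < del / 2 ->
  (forall q, (p <= q)%N -> f (x p) - f (x q) < beta * c * (del / 2)) ->
  forall q, (p <= q)%N -> enorm (x q - xs) < del.
Proof.
move=> c_gt0 big_dirs Kp xp fdrop q; elim/ltn_ind: q => q IH pq.
have bc_gt0 : 0 < beta * c by rewrite mulr_gt0.
have := dist_le_fdrop c_gt0 pq
  (fun k pk kq => or_intror (big_dirs k (leq_trans Kp pk) (IH k kq pk))).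
have := fdrop q pq => drop_lt dist_le.
have : enorm (x q - x p) < del / 2 by rewrite -(ltr_pM2l bc_gt0); lra.
by have := ler_enorm_dist (x q) (x p) xs; lra.
Qed.

Lemma accum_critical xs : accum_pt x xs -> grad f xs = 0.
Proof.
move=> xs_acc; apply/eqP/contraT => grad_neq0.
have [c [del [K [c_gt0 del_gt0 near]]]] := nonnull_near_noncritical grad_neq0.
have del2_gt0 : 0 < del / 2 by rewrite divr_gt0.
have [N fN] := f_cauchy (mulr_gt0 (mulr_gt0 beta_gt0 c_gt0) del2_gt0).
have [p [KNp xp]] := xs_acc _ del2_gt0 (maxn K N).
have Kp := leq_trans (leq_maxl _ _) KNp.
have stay := iterates_stay_near c_gt0 (fun k Kk xk => (near k Kk xk).2) Kp xp
  (fun q pq => fN p q (leq_trans (leq_maxr _ _) KNp) pq).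
have [k pk nullk] := null_steps_often p.
by have [/(_ nullk)] := near k (leq_trans Kp pk) (stay k pk).
Qed.

End IRG.

Theorem mainTheorem10 (R : realType) (n : nat) (f : 'rV[R]_n -> R)
  (mu theta beta gamma tau : R) (rho : nat -> R)
  (x g d : nat -> 'rV[R]_n) (eps r t : nat -> R) :
  C1 f ->
  IRG_backtracking f mu theta beta gamma tau rho x g d eps r t ->
  (exists m : R, forall k, m <= f (x k)) ->
  rho @ \oo --> (0 : R) ->
  [/\ ((forall k, eps k.+1 <= eps k) /\ eps @ \oo --> (0 : R)) /\
      ((forall k, r k.+1 <= r k) /\ r @ \oo --> (0 : R)),
      (forall xs, accum_pt x xs -> grad f xs = 0),
      ((exists M : R, forall k, enorm (x k) <= M) ->
         [/\ accum_set x !=set0, compact (accum_set x) & connected (accum_set x)])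
    & (forall xs, accum_pt x xs ->
         (exists2 e : R, 0 < e & forall y, accum_pt x y -> enorm (y - xs) < e -> y = xs) ->
         x @ \oo --> xs)].
Proof.
move=> f_C1 irg [m f_bounded] _.
have x_steps := iter_steps_vanish irg f_bounded.
split.
- split; split; first exact: eps_noninc irg.
  + apply: (eps_cvg0 irg f_bounded f_C1).
  + exact: r_noninc irg.
  + apply: (r_cvg0 irg f_bounded f_C1).
- apply: (accum_critical irg f_bounded f_C1).
- move=> [M x_bounded]; split; first exact: accum_nonempty x_bounded.
    exact: accum_compact x_bounded.
  apply: (accum_connected x_steps x_bounded).
- apply: (isolated_accum_cvg x_steps).
Qed.
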